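(* Fix $d\ge1$ and $\varepsilon>0$. If $f_1,f_2\in\mathsf{Tree}_d$ satisfy $\mathrm{MSE}(f_i)\le R(\mathsf{Tree}_d)+\varepsilon$ for $i\in\{1,2\}$, then \[ D(f_1,f_2)\le4\big(R(\mathsf{Tree}_d)-R(\mathsf{Tree}_{2d})+\varepsilon\big). \]
   Context: $P$ is a distribution on $\mathcal X\times\mathcal Y$ with $\mathcal X\subseteq\mathbb R^m$, $\mathcal Y\subseteq\mathbb R$; expectations are over $(x,y)\sim P$; $\mathrm{MSE}(f)=\mathbb E[(y-f(x))^2]$, $R(\mathcal F)=\inf_{f\in\mathcal F}\mathrm{MSE}(f)$, $D(f_1,f_2)=\mathbb E[(f_1(x)-f_2(x))^2]$. An axis-aligned regression tree is a rooted binary tree each internal node of which is labeled by a coordinate $j\in[m]$ and threshold $t\in\mathbb R$ and sends $x$ to the left child if $x_j\le t$ and to the right child otherwise; each leaf is labeled by a constant in $[0,1]$; the tree computes the label of the leaf reached by $x$. $\mathsf{Tree}_d$ is the class of predictors computed by such trees of depth at most $d$. *)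

From HB Require Import structures.
From mathcomp Require Import all_boot all_order all_algebra.
From mathcomp Require Import all_classical all_reals all_analysis.
Set Implicit Arguments. Unset Strict Implicit. Unset Printing Implicit Defensive.
Import Order.TTheory GRing.Theory Num.Theory.
Local Open Scope classical_set_scope.
Local Open Scope ring_scope.

Inductive rtree (R : Type) (m : nat) : Type :=
| RLeaf : R -> rtree R m
| RNode : 'I_m -> R -> rtree R m -> rtree R m -> rtree R m.
Arguments RLeaf {R m}.
Arguments RNode {R m}.

Fixpoint rtree_depth (R : Type) (m : nat) (t : rtree R m) : nat :=
  match t with
  | RLeaf _ => 0%N
  | RNode _ _ l r => (maxn (rtree_depth l) (rtree_depth r)).+1
  end.

Fixpoint rtree_labels_ok (R : realType) (m : nat) (t : rtree R m) : Prop :=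
  match t with
  | RLeaf c => 0 <= c <= 1
  | RNode _ _ l r => rtree_labels_ok l /\ rtree_labels_ok r
  end.

Fixpoint rtree_eval (R : realType) (m : nat) (t : rtree R m) (x : 'rV[R]_m) : R :=
  match t with
  | RLeaf c => c
  | RNode j th l r => if x ord0 j <= th then rtree_eval l x else rtree_eval r x
  end.

Definition Tree (R : realType) (m d : nat) : set ('rV[R]_m -> R) :=
  [set f | exists t : rtree R m,
      [/\ (rtree_depth t <= d)%N, rtree_labels_ok t & f = rtree_eval t]].

Local Open Scope ereal_scope.

(* The data (x,y) ~ P is modelled as a pair of random variables X, Y on a
   probability space (T, P); expectations over (x,y) ~ P are integrals over P. *)
Definition MSE (dT : measure_display) (T : measurableType dT) (R : realType)
  (P : probability T R) (m : nat) (X : T -> 'rV[R]_m) (Y : T -> R)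
  (f : 'rV[R]_m -> R) : \bar R :=
  \int[P]_w (((Y w - f (X w)) ^+ 2)%R)%:E.

Definition Risk (dT : measure_display) (T : measurableType dT) (R : realType)
  (P : probability T R) (m : nat) (X : T -> 'rV[R]_m) (Y : T -> R)
  (F : set ('rV[R]_m -> R)) : \bar R :=
  ereal_inf [set MSE P X Y f | f in F].

Definition Dist (dT : measure_display) (T : measurableType dT) (R : realType)
  (P : probability T R) (m : nat) (X : T -> 'rV[R]_m)
  (f1 f2 : 'rV[R]_m -> R) : \bar R :=
  \int[P]_w (((f1 (X w) - f2 (X w)) ^+ 2)%R)%:E.

(* Pointwise 2(y - a)^2 + 2(y - b)^2 = 4(y - (a + b)/2)^2 + (a - b)^2, hence
   2 MSE(f1) + 2 MSE(f2) = 4 MSE((f1 + f2)/2) + D(f1, f2).  Hanging a relabelled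
   copy of a tree for f2 below every leaf of a tree for f1 shows that (f1 + f2)/2
   lies in Tree_{2d}, so MSE((f1 + f2)/2) >= R(Tree_{2d}), and the bound follows
   from MSE(f_i) <= R(Tree_d) + eps.  Everything is finite because the labels lie
   in [0, 1] and Y is square integrable. *)

From HB Require Import structures.
From mathcomp Require Import all_boot all_order all_algebra.
From mathcomp Require Import all_classical all_reals all_analysis.
From mathcomp Require Import measurable_realfun lra ring.
Import Order.TTheory GRing.Theory Num.Theory.
Set Implicit Arguments. Unset Strict Implicit. Unset Printing Implicit Defensive.
Local Open Scope classical_set_scope.
Local Open Scope ring_scope.

Section RegressionTrees.
Variables (R : realType) (m : nat).
Implicit Types (t : rtree R m) (g : R -> R).

Fixpoint rtree_map g t : rtree R m :=
  match t with
  | RLeaf c => RLeaf (g c)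
  | RNode j th l r => RNode j th (rtree_map g l) (rtree_map g r)
  end.

Fixpoint rtree_avg t1 t2 : rtree R m :=
  match t1 with
  | RLeaf c => rtree_map (fun c' => (c + c') / 2) t2
  | RNode j th l r => RNode j th (rtree_avg l t2) (rtree_avg r t2)
  end.

Lemma rtree_depth_map g t : rtree_depth (rtree_map g t) = rtree_depth t.
Proof. by elim: t => //= j th l -> r ->. Qed.

Lemma rtree_eval_map g t x : rtree_eval (rtree_map g t) x = g (rtree_eval t x).
Proof. by elim: t => //= j th l -> r ->; case: ifP. Qed.

Lemma rtree_labels_ok_map g t : (forall c, 0 <= c <= 1 -> 0 <= g c <= 1) ->
  rtree_labels_ok t -> rtree_labels_ok (rtree_map g t).
Proof. by move=> g01; elim: t => [c|j th l IHl r IHr] /= => [/g01|[/IHl ? /IHr]]. Qed.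

Lemma rtree_depth_avg t1 t2 :
  (rtree_depth (rtree_avg t1 t2) <= rtree_depth t1 + rtree_depth t2)%N.
Proof.
elim: t1 => [c|j th l IHl r IHr] /=; first by rewrite rtree_depth_map.
rewrite addSn ltnS geq_max (leq_trans IHl) ?(leq_trans IHr) //.
  by rewrite leq_add2r leq_maxr.
by rewrite leq_add2r leq_maxl.
Qed.

Lemma rtree_eval_avg t1 t2 x :
  rtree_eval (rtree_avg t1 t2) x = (rtree_eval t1 x + rtree_eval t2 x) / 2.
Proof. by elim: t1 => [c|j th l IHl r IHr] /=; [rewrite rtree_eval_map|case: ifP]. Qed.

Lemma rtree_labels_ok_avg t1 t2 : rtree_labels_ok t1 -> rtree_labels_ok t2 ->
  rtree_labels_ok (rtree_avg t1 t2).
Proof.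
move=> + ok2; elim: t1 => [c|j th l IHl r IHr] /=; last by case=> /IHl ? /IHr.
move=> c01; apply: rtree_labels_ok_map => // c' c'01.
by apply/andP; split; rewrite ?ler_pdivrMr ?divr_ge0 //; lra.
Qed.

Lemma rtree_eval_range t x : rtree_labels_ok t -> 0 <= rtree_eval t x <= 1.
Proof. by elim: t => [c|j th l IHl r IHr] //= [/IHl ? /IHr ?]; case: ifP. Qed.

Lemma Tree_avg d1 d2 f1 f2 : @Tree R m d1 f1 -> @Tree R m d2 f2 ->
  @Tree R m (d1 + d2) (fun x => (f1 x + f2 x) / 2).
Proof.
move=> [t1 [dt1 ok1 ->]] [t2 [dt2 ok2 ->]]; exists (rtree_avg t1 t2); split.
- exact: leq_trans (rtree_depth_avg _ _) (leq_add dt1 dt2).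
- exact: rtree_labels_ok_avg.
- by apply: funext => x; rewrite rtree_eval_avg.
Qed.

Lemma Tree_range d f x : @Tree R m d f -> 0 <= f x <= 1.
Proof. by move=> [t [_ ok ->]]; exact: rtree_eval_range. Qed.

Lemma measurable_Tree_comp (dT : measure_display) (T : measurableType dT)
    (X : T -> 'rV[R]_m) d f :
  (forall j, measurable_fun setT (fun w => X w ord0 j)) ->
  @Tree R m d f -> measurable_fun setT (f \o X).
Proof.
move=> mX [t [_ _ ->]]; elim: t => [c|j th l IHl r IHr] /=.
  exact: measurable_cst.
apply: measurable_fun_ifT => //.
by apply: measurable_fun_ler => //; exact: measurable_cst.
Qed.

End RegressionTrees.

Section SquareIntegrals.
Context (dT : measure_display) (T : measurableType dT) (R : realType).
Implicit Types Y h : T -> R.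

Lemma measurable_sqr_subr Y h : measurable_fun setT Y -> measurable_fun setT h ->
  measurable_fun setT (fun w => (Y w - h w) ^+ 2).
Proof. by move=> mY mh; apply: measurable_funX; apply: measurable_funB. Qed.

Local Open Scope ereal_scope.

Lemma integralZl_sqr (mu : {measure set T -> \bar R}) (k : R) Y :
  (0 <= k)%R -> measurable_fun setT Y ->
  k%:E * \int[mu]_w (Y w ^+ 2)%:E = \int[mu]_w (k * Y w ^+ 2)%:E.
Proof.
move=> k0 mY; under [RHS]eq_integral do rewrite EFinM.
rewrite ge0_integralZl_EFin //; first by move=> w _; rewrite lee_fin sqr_ge0.
by apply/measurable_EFinP; exact: measurable_funX.
Qed.

Lemma ge0_integralD_EFin (mu : {measure set T -> \bar R}) (f g : T -> R) :
  measurable_fun setT f -> measurable_fun setT g ->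
  (forall w, 0 <= f w)%R -> (forall w, 0 <= g w)%R ->
  \int[mu]_w (f w + g w)%:E = \int[mu]_w (f w)%:E + \int[mu]_w (g w)%:E.
Proof.
move=> mf mg f0 g0; under eq_integral do rewrite EFinD.
rewrite ge0_integralD //; try by move=> w _; rewrite lee_fin.
all: exact/measurable_EFinP.
Qed.

Lemma integral_parallelogram (mu : {measure set T -> \bar R}) Y h1 h2 :
  measurable_fun setT Y -> measurable_fun setT h1 -> measurable_fun setT h2 ->
  2%:E * \int[mu]_w ((Y w - h1 w) ^+ 2)%:E + 2%:E * \int[mu]_w ((Y w - h2 w) ^+ 2)%:E =
  4%:E * \int[mu]_w ((Y w - (h1 w + h2 w) / 2) ^+ 2)%:E
    + \int[mu]_w ((h1 w - h2 w) ^+ 2)%:E.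
Proof.
move=> mY m1 m2.
have mavg : measurable_fun setT (fun w => (h1 w + h2 w) / 2)%R.
  by apply: measurable_funM; [exact: measurable_funD|exact: measurable_cst].
have mZ k h : measurable_fun setT h ->
    measurable_fun setT (fun w => k * (Y w - h w) ^+ 2)%R.
  by move=> mh; apply: measurable_funM => //; exact: measurable_sqr_subr.
rewrite !integralZl_sqr //; try exact: measurable_funB.
rewrite -!ge0_integralD_EFin //; try exact: mZ.
- by apply: eq_integral => w _; congr EFin; field.
- by apply: measurable_funX; exact: measurable_funB.
all: by move=> w; rewrite ?sqr_ge0 // mulr_ge0 ?sqr_ge0.
Qed.

Lemma integrable_sqr_subr (mu : {finite_measure set T -> \bar R}) Y h (c : R) :
  measurable_fun setT Y -> measurable_fun setT h ->
  mu.-integrable setT (fun w => (Y w ^+ 2)%:E) -> (forall w, `|h w| <= c)%R ->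
  mu.-integrable setT (fun w => ((Y w - h w) ^+ 2)%:E).
Proof.
move=> mY mh iY hc.
apply: (@le_integrable _ _ _ _ _ _ _
  ((fun w => 2%:E * (Y w ^+ 2)%:E) \+ (EFin \o cst (2 * c ^+ 2)%R))) => //.
- by apply/measurable_EFinP; exact: measurable_sqr_subr.
- move=> w _ /=; rewrite lee_fin !ger0_norm ?sqr_ge0 //; last first.
    by rewrite addr_ge0 // mulr_ge0 ?sqr_ge0.
  have := sqr_ge0 (Y w + h w); move: (hc w).
  by rewrite ler_norml !expr2 => /andP[? ?] ?; nra.
- apply: integrableD => //; first exact: integrableZl.
  exact: finite_measure_integrable_cst.
Qed.
End SquareIntegrals.

Local Open Scope ereal_scope.

Lemma parallelogram_excess_le (R : realType) (a1 a2 am D r r' : \bar R) (e : R) :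
  a1 \is a fin_num -> a2 \is a fin_num -> am \is a fin_num ->
  r \is a fin_num -> r' \is a fin_num ->
  2%:E * a1 + 2%:E * a2 = 4%:E * am + D -> r' <= am ->
  a1 <= r + e%:E -> a2 <= r + e%:E -> D <= 4%:E * (r - r' + e%:E).
Proof.
move=> /fineK <- /fineK <- /fineK <- /fineK <- /fineK <-.
case: D => [D||] //; rewrite -!EFinM -!EFinD !lee_fin => -[]; lra.
Qed.

Section Risk.
Context (dT : measure_display) (T : measurableType dT) (R : realType)
  (P : probability T R) (m : nat) (X : T -> 'rV[R]_m) (Y : T -> R).
Implicit Types (f : 'rV[R]_m -> R) (F : set ('rV[R]_m -> R)).

Lemma Risk_le_MSE F f : F f -> Risk P X Y F <= MSE P X Y f.
Proof. by move=> Ff; apply: ereal_inf_lbound; exists f. Qed.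

Lemma Risk_ge0 F : 0 <= Risk P X Y F.
Proof.
apply: le_ereal_inf_tmp => _ [f _ <-].
by apply: integral_ge0 => w _; rewrite lee_fin sqr_ge0.
Qed.

Lemma fin_num_Risk F f :
  F f -> MSE P X Y f \is a fin_num -> Risk P X Y F \is a fin_num.
Proof.
move=> Ff finf; rewrite ge0_fin_numE ?Risk_ge0 //.
by rewrite (le_lt_trans (Risk_le_MSE Ff)) // ltey_eq finf.
Qed.

Hypotheses (HX : forall j : 'I_m, measurable_fun setT (fun w => X w ord0 j))
  (HY : measurable_fun setT Y)
  (HY2 : P.-integrable setT (fun w => (Y w ^+ 2)%:E)).

Lemma MSE_parallelogram f1 f2 :
  measurable_fun setT (f1 \o X) -> measurable_fun setT (f2 \o X) ->
  2%:E * MSE P X Y f1 + 2%:E * MSE P X Y f2 =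
  4%:E * MSE P X Y (fun x => (f1 x + f2 x) / 2)%R + Dist P X f1 f2.
Proof. exact: integral_parallelogram. Qed.

Lemma fin_num_MSE_Tree d f : @Tree R m d f -> MSE P X Y f \is a fin_num.
Proof.
move=> Tf; apply: integrable_fin_num => //.
apply: (integrable_sqr_subr (c := 1%R) HY (measurable_Tree_comp HX Tf) HY2) => w.
by have /andP[f0 f1] := Tree_range (X w) Tf; rewrite ger0_norm.
Qed.

End Risk.

Theorem corollary3 (dT : measure_display) (T : measurableType dT) (R : realType)
  (P : probability T R) (m : nat) (X : T -> 'rV[R]_m) (Y : T -> R)
  (HX : forall j : 'I_m, measurable_fun setT (fun w => X w ord0 j))
  (HY : measurable_fun setT Y)
  (HY2 : P.-integrable setT (fun w => ((Y w ^+ 2)%R)%:E))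
  (d : nat) (eps : R) (f1 f2 : 'rV[R]_m -> R) :
  (1 <= d)%N -> (0 < eps)%R ->
  @Tree R m d f1 -> @Tree R m d f2 ->
  MSE P X Y f1 <= Risk P X Y (@Tree R m d) + eps%:E ->
  MSE P X Y f2 <= Risk P X Y (@Tree R m d) + eps%:E ->
  Dist P X f1 f2 <=
    4%:E * (Risk P X Y (@Tree R m d) - Risk P X Y (@Tree R m (2 * d)) + eps%:E).
Proof.
move=> _ _ Tf1 Tf2 le1 le2.
have Tavg : @Tree R m (2 * d) (fun x => (f1 x + f2 x) / 2)%R.
  by rewrite mul2n -addnn; exact: Tree_avg.
have fin_MSE := fin_num_MSE_Tree HX HY HY2.
apply: parallelogram_excess_le le1 le2.
- exact: fin_MSE Tf1.
- exact: fin_MSE Tf2.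
- exact: fin_MSE Tavg.
- exact: fin_num_Risk Tf1 (fin_MSE _ _ Tf1).
- exact: fin_num_Risk Tavg (fin_MSE _ _ Tavg).
- apply: MSE_parallelogram => //.
  + exact: measurable_Tree_comp HX Tf1.
  + exact: measurable_Tree_comp HX Tf2.
- exact: Risk_le_MSE.
Qed.
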